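(* Let $X$ be a topological space, $D$ a countable set, and $\mathcal{I}\subseteq P(D)$ an ideal. Suppose that for every family $\{f_d\}_{d\in D}$ of pairwise distinct continuous real-valued functions on $X$ which $\mathcal{I}$-converges to $0$, there is $A\in\mathcal{I}^*$ such that $\{f_d\}_{d\in A}$ converges pointwise to $0$. Then $X$ has the $\mathcal{I}$-convergence property (i.e., the same conclusion holds for all families $\{f_d\}_{d\in D}$ of continuous real-valued functions, not necessarily distinct, which $\mathcal{I}$-converge to $0$).
   Context: An ideal $\mathcal{I}\subseteq P(D)$ contains all singletons and is closed under subsets and finite unions; $\mathcal{I}^*=\{D\setminus A:A\in\mathcal{I}\}$ is its dual filter. A family of reals $\{r_d\}_{d\in D}$ $\mathcal{I}$-converges to $0$ if for each $\epsilon>0$, $\{d\in D:|r_d|<\epsilon\}\in\mathcal{I}^*$. A family $\{f_d\}_{d\in D}$ of real-valued functions on $X$ $\mathcal{I}$-converges to $0$ if $\{f_d(x)\}_{d\in D}$ $\mathcal{I}$-converges to $0$ for each $x\in X$. For infinite $A\subseteq D$, $\{f_d\}_{d\in A}$ converges pointwise to $0$ means that for each $x$ and $\epsilon>0$, $|f_d(x)|\ge\epsilon$ for only finitely many $d\in A$. $X$ has the $\mathcal{I}$-convergence property if for every family $\{f_d\}_{d\in D}$ of continuous real-valued functions on $X$ which $\mathcal{I}$-converges to $0$ there is $A\in\mathcal{I}^*$ such that $\{f_d\}_{d\in A}$ converges pointwise to $0$. *)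

From Stdlib Require Import Reals List.
Open Scope R_scope.

Definition is_topology {X : Type} (opn : (X -> Prop) -> Prop) : Prop :=
  opn (fun _ => True) /\
  (forall U V, opn U -> opn V -> opn (fun x => U x /\ V x)) /\
  (forall (F : (X -> Prop) -> Prop),
     (forall U, F U -> opn U) -> opn (fun x => exists U, F U /\ U x)).

Definition R_open (U : R -> Prop) : Prop :=
  forall y, U y -> exists eps, eps > 0 /\ forall z, Rabs (z - y) < eps -> U z.

Definition continuous_on {X : Type} (opn : (X -> Prop) -> Prop) (f : X -> R) : Prop :=
  forall U, R_open U -> opn (fun x => U (f x)).

Definition countable (D : Type) : Prop :=
  exists g : D -> nat, forall d1 d2, g d1 = g d2 -> d1 = d2.

Definition is_ideal {D : Type} (I : (D -> Prop) -> Prop) : Prop :=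
  (forall d0, I (fun d => d = d0)) /\
  (forall A B, I A -> (forall d, B d -> A d) -> I B) /\
  (I (fun _ => False)) /\
  (forall A B, I A -> I B -> I (fun d => A d \/ B d)).

Definition dual_filter {D : Type} (I : (D -> Prop) -> Prop) (A : D -> Prop) : Prop :=
  exists B, I B /\ forall d, A d <-> ~ B d.

Definition I_conv0 {D : Type} (I : (D -> Prop) -> Prop) (r : D -> R) : Prop :=
  forall eps, eps > 0 -> dual_filter I (fun d => Rabs (r d) < eps).

Definition I_conv0_fun {D X : Type} (I : (D -> Prop) -> Prop) (f : D -> X -> R) : Prop :=
  forall x, I_conv0 I (fun d => f d x).

(* {f_d}_{d in A} converges pointwise to 0: for each x and eps > 0,
   |f_d x| >= eps for only finitely many d in A. *)
Definition ptwise_conv0_on {D X : Type} (A : D -> Prop) (f : D -> X -> R) : Prop :=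
  forall x eps, eps > 0 ->
    exists l : list D, forall d, A d -> Rabs (f d x) >= eps -> In d l.

Definition I_convergence_property {X D : Type} (opn : (X -> Prop) -> Prop)
    (I : (D -> Prop) -> Prop) : Prop :=
  forall f : D -> X -> R,
    (forall d, continuous_on opn (f d)) -> I_conv0_fun I f ->
    exists A, dual_filter I A /\ ptwise_conv0_on A f.

(* Perturb each f_d by a constant c_d, where c_d -> 0 along an enumeration of D (so c_d is
   small for all but finitely many d) and f_d(x0) + c_d is an odd multiple of 2^-(n_d+1),
   n_d being the index of d.  Distinct indices give distinct 2-adic valuations, so the
   perturbed functions are pairwise distinct; they are still continuous and I-convergent,
   and pointwise convergence on some A in I^* transfers back to the f_d since only finitely
   many c_d are not small. *)

From Stdlib Require Import Reals List.
From Stdlib Require Import Lra Lia ZArith Classical FinFun FunctionalExtensionality.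
Open Scope R_scope.

Definition dyadic_above (y : R) (n : nat) : R := (IZR (up (y * 2 ^ n)) + / 2) / 2 ^ n.

Lemma dyadic_above_gap y n : 0 < dyadic_above y n - y <= 2 / 2 ^ n.
Proof.
  unfold dyadic_above.
  assert (Hp : 0 < 2 ^ n) by (apply pow_lt; lra).
  destruct (archimed (y * 2 ^ n)) as [Hup1 Hup2].
  replace ((IZR (up (y * 2 ^ n)) + / 2) / 2 ^ n - y)
    with ((IZR (up (y * 2 ^ n)) - y * 2 ^ n + / 2) / 2 ^ n) by (field; lra).
  split.
  - apply Rdiv_lt_0_compat; lra.
  - apply Rmult_le_compat_r; [left; apply Rinv_0_lt_compat|]; lra.
Qed.

Lemma odd_mul_pow2_cancel (k j : Z) (a m : nat) :
  ((2 * k + 1) * 2 ^ Z.of_nat (a + m) = (2 * j + 1) * 2 ^ Z.of_nat a)%Z -> m = 0%nat.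
Proof.
  rewrite Nat2Z.inj_add, Z.pow_add_r by lia; intro E.
  assert (Ha : (0 < 2 ^ Z.of_nat a)%Z) by (apply Z.pow_pos_nonneg; lia).
  assert (E' : ((2 * k + 1) * 2 ^ Z.of_nat m = 2 * j + 1)%Z).
  { apply (Z.mul_cancel_r _ _ (2 ^ Z.of_nat a)); [lia|]. rewrite <- E. ring. }
  destruct m as [|m]; [reflexivity|].
  apply (f_equal Z.odd) in E'.
  rewrite Z.odd_mul, (Z.odd_pow 2), !(Z.add_comm _ 1), !Z.odd_add_mul_2 in E' by lia.
  discriminate.
Qed.

Lemma odd_mul_pow2_inj (k j : Z) (a b : nat) :
  ((2 * k + 1) * 2 ^ Z.of_nat b = (2 * j + 1) * 2 ^ Z.of_nat a)%Z -> a = b.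
Proof.
  intro E. destruct (Nat.le_ge_cases a b) as [Hab | Hab].
  - replace b with (a + (b - a))%nat in E by lia.
    apply odd_mul_pow2_cancel in E. lia.
  - replace a with (b + (a - b))%nat in E by lia.
    symmetry in E. apply odd_mul_pow2_cancel in E. lia.
Qed.

Lemma dyadic_above_level_inj y1 y2 n1 n2 :
  dyadic_above y1 n1 = dyadic_above y2 n2 -> n1 = n2.
Proof.
  unfold dyadic_above.
  set (k1 := up (y1 * 2 ^ n1)); set (k2 := up (y2 * 2 ^ n2)); intro E.
  assert (P1 : 0 < 2 ^ n1) by (apply pow_lt; lra).
  assert (P2 : 0 < 2 ^ n2) by (apply pow_lt; lra).
  apply (odd_mul_pow2_inj k1 k2), eq_IZR.
  rewrite !mult_IZR, <- !pow_IZR, !plus_IZR, !mult_IZR.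
  change (IZR 2) with 2.
  replace ((2 * IZR k1 + 1) * 2 ^ n2)
    with (2 * 2 ^ n1 * 2 ^ n2 * ((IZR k1 + / 2) / 2 ^ n1)) by (field; lra).
  rewrite E. field; lra.
Qed.

Section Families.

Context {D : Type}.

Definition vanishing (c : D -> R) : Prop :=
  forall eps, eps > 0 -> exists l : list D, forall d, Rabs (c d) >= eps -> In d l.

Lemma injective_nat_preimage_finite (g : D -> nat) :
  Injective g -> forall N, exists l : list D, forall d, (g d <= N)%nat -> In d l.
Proof.
  intros Hg N.
  assert (Hfiber : forall m, exists l : list D, forall d, g d = m -> In d l).
  { intro m. destruct (classic (exists d0, g d0 = m)) as [[d0 Hd0] | Hnone].
    - exists (d0 :: nil). intros d Hd. left. apply Hg. congruence.
    - exists nil. intros d Hd. apply Hnone. eauto. }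
  induction N as [|N [l1 Hl1]].
  - destruct (Hfiber 0%nat) as [l Hl]. exists l. intros d Hd. apply Hl. lia.
  - destruct (Hfiber (S N)) as [l2 Hl2]. exists (l1 ++ l2). intros d Hd.
    apply in_or_app. destruct (Nat.eq_dec (g d) (S N)).
    + right. apply Hl2. assumption.
    + left. apply Hl1. lia.
Qed.

Lemma perturb_injective (g : D -> nat) (v : D -> R) :
  Injective g -> exists c, vanishing c /\ Injective (fun d => v d + c d).
Proof.
  intro Hg. exists (fun d => dyadic_above (v d) (g d) - v d). split.
  - intros eps Heps.
    destruct (Pow_x_infinity 2 ltac:(rewrite Rabs_pos_eq; lra) (3 / eps)) as [N HN].
    destruct (injective_nat_preimage_finite g Hg N) as [l Hl].
    exists l. intros d Hd. apply Hl.
    destruct (Nat.le_gt_cases (g d) N) as [|Hlt]; [assumption | exfalso].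
    specialize (HN (g d) ltac:(lia)). rewrite Rabs_pos_eq in HN by (apply pow_le; lra).
    destruct (dyadic_above_gap (v d) (g d)) as [Hpos Hbound].
    rewrite Rabs_pos_eq in Hd by lra.
    assert (Hp : 0 < 2 ^ g d) by (apply pow_lt; lra).
    assert (Hsmall : eps * 2 ^ g d <= 2).
    { replace 2 with (2 / 2 ^ g d * 2 ^ g d) at 2 by (field; lra).
      apply Rmult_le_compat_r; lra. }
    apply Rge_le, (Rmult_le_compat_r eps) in HN; [|lra].
    replace (3 / eps * eps) with 3 in HN by (field; lra). lra.
  - intros d1 d2 E. apply Hg, (dyadic_above_level_inj (v d1) (v d2)). lra.
Qed.

Lemma ptwise_conv0_on_add {X : Type} (A : D -> Prop) (f h : D -> X -> R) :
  ptwise_conv0_on A f -> ptwise_conv0_on A h -> ptwise_conv0_on A (fun d x => f d x + h d x).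
Proof.
  intros Hf Hh x eps Heps.
  destruct (Hf x (eps / 2) ltac:(lra)) as [l1 Hl1].
  destruct (Hh x (eps / 2) ltac:(lra)) as [l2 Hl2].
  exists (l1 ++ l2). intros d Ad Hd. apply in_or_app.
  pose proof (Rabs_triang (f d x) (h d x)).
  destruct (Rlt_or_le (Rabs (f d x)) (eps / 2)).
  - right. apply Hl2; [assumption | lra].
  - left. apply Hl1; [assumption | lra].
Qed.

Lemma vanishing_ptwise_conv0_on {X : Type} (A : D -> Prop) (c : D -> R) :
  vanishing c -> ptwise_conv0_on A (fun d (_ : X) => c d).
Proof.
  intros Hc _ eps Heps. destruct (Hc eps Heps) as [l Hl]. exists l. auto.
Qed.

Lemma vanishing_opp (c : D -> R) : vanishing c -> vanishing (fun d => - c d).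
Proof. intros Hc eps Heps. setoid_rewrite Rabs_Ropp. exact (Hc eps Heps). Qed.

Variable I : (D -> Prop) -> Prop.
Hypothesis HI : is_ideal I.

Lemma ideal_list (l : list D) : I (fun d => In d l).
Proof.
  destruct HI as [Hsingle [Hsub [Hempty Hunion]]].
  induction l as [|d0 l IHl]; [exact Hempty|].
  apply (Hsub _ _ (Hunion _ _ (Hsingle d0) IHl)). intros d [-> | Hd]; auto.
Qed.

Lemma dual_filter_of_ideal_compl (P : D -> Prop) : I (fun d => ~ P d) -> dual_filter I P.
Proof.
  intro HP. exists (fun d => ~ P d). split; [exact HP|].
  intro d. split; [tauto | apply NNPP].
Qed.

Lemma dual_filter_superset (A B : D -> Prop) :
  dual_filter I A -> (forall d, A d -> B d) -> dual_filter I B.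
Proof.
  intros [C [HC HAC]] HAB. apply dual_filter_of_ideal_compl.
  apply (proj1 (proj2 HI) _ _ HC). intros d HnB.
  apply NNPP. intro HnC. apply HnB, HAB, HAC, HnC.
Qed.

Lemma dual_filter_inter (A B : D -> Prop) :
  dual_filter I A -> dual_filter I B -> dual_filter I (fun d => A d /\ B d).
Proof.
  intros [CA [HCA HA]] [CB [HCB HB]]. apply dual_filter_of_ideal_compl.
  destruct HI as [_ [Hsub [_ Hunion]]].
  apply (Hsub _ _ (Hunion _ _ HCA HCB)). intros d Hd.
  apply NNPP. intro Hn. apply Hd. split; [apply HA | apply HB]; tauto.
Qed.

Lemma vanishing_I_conv0 (c : D -> R) : vanishing c -> I_conv0 I c.
Proof.
  intros Hc eps Heps. destruct (Hc eps Heps) as [l Hl].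
  apply dual_filter_of_ideal_compl, (proj1 (proj2 HI) _ _ (ideal_list l)).
  intros d Hd. apply Hl. lra.
Qed.

Lemma I_conv0_add (r s : D -> R) :
  I_conv0 I r -> I_conv0 I s -> I_conv0 I (fun d => r d + s d).
Proof.
  intros Hr Hs eps Heps.
  apply (dual_filter_superset _ _
           (dual_filter_inter _ _ (Hr (eps / 2) ltac:(lra)) (Hs (eps / 2) ltac:(lra)))).
  intros d [Hrd Hsd]. eapply Rle_lt_trans; [apply Rabs_triang | lra].
Qed.

End Families.

Lemma continuous_on_add_const {X : Type} (opn : (X -> Prop) -> Prop) (f : X -> R) (c : R) :
  continuous_on opn f -> continuous_on opn (fun x => f x + c).
Proof.
  intros Hf U HU. apply (Hf (fun y => U (y + c))).
  intros y Hy. destruct (HU _ Hy) as [eps [Heps Hball]].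
  exists eps. split; [exact Heps|]. intros z Hz. apply Hball.
  replace (z + c - (y + c)) with (z - y) by ring. exact Hz.
Qed.

Theorem mainTheorem13 (X : Type) (opn : (X -> Prop) -> Prop) (D : Type)
  (I : (D -> Prop) -> Prop)
  (Htop : is_topology opn) (Hcount : countable D) (Hideal : is_ideal I)
  (Hdistinct : forall f : D -> X -> R,
      (forall d1 d2, f d1 = f d2 -> d1 = d2) ->
      (forall d, continuous_on opn (f d)) -> I_conv0_fun I f ->
      exists A, dual_filter I A /\ ptwise_conv0_on A f) :
  I_convergence_property opn I.
Proof.
  intros f Hcont Hconv.
  destruct (classic (inhabited X)) as [[x0] | Hempty].
  2: { exists (fun _ => True). split.
       - destruct Hideal as [_ [Hsub [Hempty_ideal _]]].
         apply (dual_filter_of_ideal_compl I), (Hsub _ _ Hempty_ideal). tauto.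
       - intro x. exfalso. exact (Hempty (inhabits x)). }
  destruct Hcount as [g Hg].
  destruct (perturb_injective g (fun d => f d x0) Hg) as [c [Hc Hinj]].
  set (h := fun d x => f d x + c d).
  assert (Hh_inj : Injective h).
  { intros d1 d2 E. apply Hinj. exact (f_equal (fun k => k x0) E). }
  assert (Hh_conv : I_conv0_fun I h).
  { intro x. apply (I_conv0_add I Hideal); [apply Hconv | apply vanishing_I_conv0; assumption]. }
  destruct (Hdistinct h Hh_inj (fun d => continuous_on_add_const opn _ _ (Hcont d)) Hh_conv)
    as [A [HA Hh_pt]].
  exists A. split; [exact HA|].
  replace f with (fun d x => h d x + - c d)
    by (apply functional_extensionality; intro d; apply functional_extensionality;
        intro x; unfold h; ring).
  apply (ptwise_conv0_on_add A h); [exact Hh_pt|].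
  apply vanishing_ptwise_conv0_on, vanishing_opp, Hc.
Qed.
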